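(* Let $S$ be a strongly $E^*$-unitary inverse semigroup with pure grading $\varphi:S^\times\to\mathbb F[\mathcal A]$ such that $E_{st}\subseteq E_s$ whenever $|st|=|s|+|t|$, and let $R$ be a commutative unital ring. For each $a\in\mathcal A$ let $C_a\subseteq E_a$ be such that every $x\in E_a$ satisfies $x\le y$ for some $y\in C_a$, and let $C_{a^{-1}}\subseteq E_{a^{-1}}$ satisfy the analogous condition. Then $L_R(S,\varphi)$ is generated as an $R$-algebra by $$\{x\delta_e\}_{x\in E}\cup\{x\delta_a\}_{a\in\mathcal A,\,x\in C_a}\cup\{x\delta_{a^{-1}}\}_{a\in\mathcal A,\,x\in C_{a^{-1}}}.$$
   Context: $S$ is an inverse semigroup with zero, $s^*$ the unique inverse, $E$ the idempotents (meet semilattice with $x\wedge y=xy$, least element $0$), $S^\times=S\setminus\{0\}$, $E^\times=E\setminus\{0\}$. A pure grading is a map $\varphi:S^\times\to G$ to a group with $\varphi(ab)=\varphi(a)\varphi(b)$ whenever $ab\ne0$ and $\varphi^{-1}(1_G)=E^\times$. For $g\in G$, $E_g=\{x\in E: x\le ss^*$ for some $s$ with $\varphi(s)=g\}$ if $\varphi^{-1}(g)\ne\emptyset$, else $\{0\}$; $\phi_g:E_{g^{-1}}\to E_g$, $x\mapsto sxs^*$ ($\varphi(s)=g$, $x\le s^*s$). $|\cdot|$ is reduced word length in the free group $\mathbb F[\mathcal A]$; $e$ its identity. For a meet semilattice $P$ with $0$: a filter is a subset $F$, $\emptyset\ne F\ne P$, closed upwards and under meets; $F(P)$ has topology generated by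 $\{F:x\in F\}$; tight filters $T(P)$ are the closure of the ultrafilters; $V^P_{(x:x_1,\dots,x_n)}=\{\xi\in T(P):x\in\xi, x_i\notin\xi\}$, $V_x=V_{(x:)}$; $\mathcal T_c(P)$ is the generalized Boolean algebra of compact open subsets of $T(P)$. $\mathcal T_c(E_g)$ is identified with the ideal of $\mathcal T_c(E)$ of compact open sets contained in $\bigcup_{x\in E_g}V^E_x$, and $\hat\phi_g:\mathcal T_c(E_{g^{-1}})\to\mathcal T_c(E_g)$ is the isomorphism induced by $\phi_g$; $\Phi=(\{\mathcal T_c(E_g)\},\{\hat\phi_g\})$ is a partial action. For a partial action $\Phi=(\{\mathcal I_t\},\{\phi_t\})$ on a generalized Boolean algebra $\mathcal B$: $\mathrm{Lc}(R,\mathcal B)$ is the $R$-algebra of functions $f:R\setminus\{0\}\to\mathcal B$ with pairwise disjoint values, almost all $0$, viewed as $\sum_r r1_{f(r)}$ (equivalently locally constant compactly supported functions on the Stone dual); $1_U$ sends $1\mapsto U$, else $0$; $\mathrm{Lc}(R,\mathcal B)\rtimes_\Phi G$ consists of finite sums $\sum_t f_t\delta_t$, $f_t\in\mathrm{Lc}(R,\mathcal I_t)$, with $(a\delta_s)(b\delta_t)=\tilde\phi_s(\tilde\phi_{s^{-1}}(a)b)\delta_{st}$, $\tilde\phi_t(f)=\phi_t\circ f$. $L_R(S,\varphi):=\mathrm{Lc}(R,\mathcal T_c(E))\rtimes_\Phi G$, and for $x\in E_g$, $x\delta_g:=1_{V_x}\delta_g$. *)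

From HB Require Import structures.
From mathcomp Require Import all_boot all_algebra.
From Stdlib Require Import ClassicalEpsilon.
Set Implicit Arguments. Unset Strict Implicit. Unset Printing Implicit Defensive.
Import GRing.Theory.

(* Free group F[A] on a set A (with decidable equality), as reduced words *)
(* over the letters (a, true) = a and (a, false) = a^{-1}.                *)

Definition cancels (A : eqType) (l m : A * bool) : bool :=
  (l.1 == m.1) && (l.2 != m.2).

Fixpoint reducedb (A : eqType) (w : seq (A * bool)) : bool :=
  match w with
  | l :: ((m :: _) as w') => ~~ cancels l m && reducedb w'
  | _ => true
  end.

Definition cons_red (A : eqType) (l : A * bool) (w : seq (A * bool)) :=
  match w with
  | m :: w' => if cancels l m then w' else l :: w
  | [::] => [:: l]
  end.

Lemma cons_red_reduced (A : eqType) l (w : seq (A * bool)) :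
  reducedb w -> reducedb (cons_red l w).
Proof.
case: w => [|m w] //=; case: ifP => H.
- by case: w => [|k w] //= /andP[].
- by move=> Hw; rewrite /= H Hw.
Qed.

Lemma foldr_cons_red_reduced (A : eqType) (u v : seq (A * bool)) :
  reducedb v -> reducedb (foldr (@cons_red A) v u).
Proof. by elim: u => //= l u IH Hv; apply: cons_red_reduced; apply: IH. Qed.

Lemma foldl_inv_reduced (A : eqType) (w acc : seq (A * bool)) :
  reducedb acc ->
  reducedb (foldl (fun acc l => cons_red (l.1, ~~ l.2) acc) acc w).
Proof.
by elim: w acc => //= l w IH acc H; apply: IH; apply: cons_red_reduced.
Qed.

Definition FG (A : eqType) := {w : seq (A * bool) | reducedb w}.
HB.instance Definition _ (A : eqType) := Equality.copy (FG A) {w : seq (A * bool) | reducedb w}.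

Definition fg_one (A : eqType) : FG A := exist _ [::] isT.

Definition fg_mul (A : eqType) (u v : FG A) : FG A :=
  exist _ (foldr (@cons_red A) (val v) (val u))
        (foldr_cons_red_reduced (val u) (valP v)).

Definition fg_inv (A : eqType) (u : FG A) : FG A :=
  exist _ (foldl (fun acc l => cons_red (l.1, ~~ l.2) acc) [::] (val u))
        (foldl_inv_reduced (val u) (isT : reducedb [::])).

Definition fg_gen (A : eqType) (a : A) : FG A := exist _ [:: (a, true)] isT.
Definition fg_geninv (A : eqType) (a : A) : FG A := exist _ [:: (a, false)] isT.

Definition fg_len (A : eqType) (g : FG A) : nat := size (val g).

(* regular semigroup with zero whose idempotents commute; sstar s is then *)
(* the unique inverse s^* of s *)
Record invsg := InvSg {
  isg_car :> Type;
  smul : isg_car -> isg_car -> isg_car;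
  szero : isg_car;
  sstar : isg_car -> isg_car;
  smulA : forall a b c, smul a (smul b c) = smul (smul a b) c;
  smul0l : forall a, smul szero a = szero;
  smul0r : forall a, smul a szero = szero;
  sstar_inv1 : forall s, smul (smul s (sstar s)) s = s;
  sstar_inv2 : forall s, smul (smul (sstar s) s) (sstar s) = sstar s;
  sidem_comm : forall e f, smul e e = e -> smul f f = f -> smul e f = smul f e
}.

Definition idem (S : invsg) (x : S) : Prop := smul x x = x.
Definition sle (S : invsg) (x y : S) : Prop := x = smul x y.

(* pure grading phi : S^x -> G (phi is given on all of S; its value at 0 *)
(* plays no role) *)
Definition pure_grading (S : invsg) (G : Type) (gmul : G -> G -> G) (g1 : G)
  (phi : S -> G) : Prop :=
  (forall a b : S, smul a b <> szero S -> phi (smul a b) = gmul (phi a) (phi b)) /\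
  (forall s : S, s <> szero S -> (phi s = g1 <-> idem s)).

Definition is_group (G : Type) (gmul : G -> G -> G) (ginv : G -> G) (g1 : G) :=
  (forall a b c, gmul a (gmul b c) = gmul (gmul a b) c) /\
  (forall a, gmul g1 a = a) /\ (forall a, gmul (ginv a) a = g1).

Definition strongly_Estar_unitary (S : invsg) : Prop :=
  exists (G : Type) (gmul : G -> G -> G) (ginv : G -> G) (g1 : G) (phi : S -> G),
    is_group gmul ginv g1 /\ pure_grading gmul g1 phi.

Definition Eg (S : invsg) (A : eqType) (phi : S -> FG A) (g : FG A) (x : S) : Prop :=
  idem x /\
  (x = szero S \/
   exists s : S, s <> szero S /\ phi s = g /\ sle x (smul s (sstar s))).

Definition is_filter (S : invsg) (F : S -> Prop) : Prop :=
  (forall x, F x -> idem x) /\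
  (exists x, F x) /\
  (exists x, idem x /\ ~ F x) /\
  (forall x y, F x -> idem y -> sle x y -> F y) /\
  (forall x y, F x -> F y -> F (smul x y)).

Definition ultrafilter (S : invsg) (F : S -> Prop) : Prop :=
  is_filter F /\
  forall G : S -> Prop, is_filter G -> (forall x, F x -> G x) -> forall x, G x -> F x.

(* basic open sets of the (patch) topology on filters:                    *)
Definition inB (S : invsg) (xs ys : seq S) (F : S -> Prop) : Prop :=
  (forall x, List.In x xs -> F x) /\ (forall y, List.In y ys -> ~ F y).

(* tight filters = closure of the ultrafilters *)
Definition tight (S : invsg) (F : S -> Prop) : Prop :=
  is_filter F /\
  forall xs ys, inB xs ys F -> exists U, ultrafilter U /\ inB xs ys U.

Definition openT (S : invsg) (O : (S -> Prop) -> Prop) : Prop :=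
  (forall xi, O xi -> tight xi) /\
  forall xi, O xi -> exists xs ys, inB xs ys xi /\
    forall eta, tight eta -> inB xs ys eta -> O eta.

Definition compactT (S : invsg) (K : (S -> Prop) -> Prop) : Prop :=
  forall (I : Type) (O : I -> (S -> Prop) -> Prop),
    (forall i, openT (O i)) ->
    (forall xi, K xi -> exists i, O i xi) ->
    exists s : list I, forall xi, K xi -> exists2 i, List.In i s & O i xi.

Definition Vx (S : invsg) (x : S) : (S -> Prop) -> Prop :=
  fun xi => tight xi /\ xi x.

(* union of V_x, x in E_g: the domain of the ideal T_c(E_g) *)
Definition Dg (S : invsg) (A : eqType) (phi : S -> FG A) (g : FG A) :
  (S -> Prop) -> Prop :=
  fun xi => tight xi /\ exists x, Eg phi g x /\ xi x.

(* the map on tight filters induced by phi_g : E_{g^-1} -> E_g,            *)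
(* theta_g(xi) = upward closure of phi_g(xi /\ E_{g^-1}),                 *)
(* phi_g(x) = s x s^* with phi(s) = g, x <= s^* s                          *)
Definition theta (S : invsg) (A : eqType) (phi : S -> FG A) (g : FG A)
  (xi : S -> Prop) : S -> Prop :=
  fun y => idem y /\ exists x s, xi x /\ s <> szero S /\ phi s = g /\
    sle x (smul (sstar s) s) /\ sle (smul (smul s x) (sstar s)) y.

Definition pdec (P : Prop) : bool :=
  if excluded_middle_informative P then true else false.

Definition ind (S : invsg) (R : comPzRingType) (U : (S -> Prop) -> Prop) :
  (S -> Prop) -> R := fun xi => if pdec (U xi) then 1%R else 0%R.

Definition Lc_in (S : invsg) (A : eqType) (phi : S -> FG A) (R : comPzRingType)
  (t : FG A) (f : (S -> Prop) -> R) : Prop :=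
  exists l : seq (R * ((S -> Prop) -> Prop)),
    (forall p, List.In p l ->
       compactT p.2 /\ openT p.2 /\ forall xi, p.2 xi -> Dg phi t xi) /\
    forall xi, f xi = (\sum_(p <- l) p.1 * ind R p.2 xi)%R.

Definition tphi (S : invsg) (A : eqType) (phi : S -> FG A) (R : comPzRingType)
  (g : FG A) (f : (S -> Prop) -> R) : (S -> Prop) -> R :=
  fun xi => if pdec (Dg phi g xi) then f (theta phi (fg_inv g) xi) else 0%R.

(* elements of L_R(S, phi) as formal finite sums  sum f_t delta_t *)
Definition LRelt (S : invsg) (A : eqType) (R : comPzRingType) :=
  seq (FG A * ((S -> Prop) -> R)).

Definition LR_valid (S : invsg) (A : eqType) (phi : S -> FG A) (R : comPzRingType)
  (z : LRelt S A R) : Prop :=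
  forall p, List.In p z -> Lc_in phi p.1 p.2.

(* the element of the crossed product represented by a formal sum:         *)
(* its coefficient f_t at delta_t                                           *)
Definition LR_eval (S : invsg) (A : eqType) (R : comPzRingType)
  (z : LRelt S A R) : FG A -> (S -> Prop) -> R :=
  fun t xi => (\sum_(p <- z | p.1 == t) p.2 xi)%R.

Definition LR_add (S : invsg) (A : eqType) (R : comPzRingType)
  (z w : LRelt S A R) : LRelt S A R := z ++ w.

Definition LR_scale (S : invsg) (A : eqType) (R : comPzRingType)
  (r : R) (z : LRelt S A R) : LRelt S A R :=
  [seq (p.1, fun xi => (r * p.2 xi)%R) | p <- z].

(* (a delta_s)(b delta_t) = tphi_s (tphi_{s^-1}(a) b) delta_{st} *)
Definition LR_mul (S : invsg) (A : eqType) (phi : S -> FG A) (R : comPzRingType)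
  (z w : LRelt S A R) : LRelt S A R :=
  [seq (fg_mul p.1 q.1,
        tphi phi p.1 (fun xi => (tphi phi (fg_inv p.1) p.2 xi * q.2 xi)%R))
  | p <- z, q <- w].

Inductive generated (S : invsg) (A : eqType) (phi : S -> FG A) (R : comPzRingType)
  (X : LRelt S A R -> Prop) : LRelt S A R -> Prop :=
| gen_base z : X z -> generated phi X z
| gen_zero : generated phi X [::]
| gen_add z w : generated phi X z -> generated phi X w ->
    generated phi X (LR_add z w)
| gen_scale r z : generated phi X z -> generated phi X (LR_scale r z)
| gen_mul z w : generated phi X z -> generated phi X w ->
    generated phi X (LR_mul phi z w).

Definition xdelta (S : invsg) (A : eqType) (R : comPzRingType) (x : S) (g : FG A) :
  LRelt S A R := [:: (g, ind R (Vx x))].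

Definition LR_gens (S : invsg) (A : eqType) (R : comPzRingType)
  (C Cinv : A -> S -> Prop) (z : LRelt S A R) : Prop :=
  (exists x, idem x /\ z = xdelta R x (fg_one A)) \/
  (exists a x, C a x /\ z = xdelta R x (fg_gen a)) \/
  (exists a x, Cinv a x /\ z = xdelta R x (fg_geninv a)).

(* An element of L_R(S, φ) is a sum of terms f δ_t with f in Lc(R, T_c(E_t)).
   By compactness, every compact open subset of the domain of T_c(E_t) is a
   finite union of basic sets V_(x0 : ys) ∩ ⋂ V_xs with x0 ∈ E_t; by
   inclusion–exclusion and 1_{V_x} 1_{V_y} = 1_{V_xy}, f is then an
   R-combination of indicators 1_{V_x} with x ∈ E_t.  So it suffices to generate
   x δ_t, which is done by induction on |t|.  Write t = c t' with c a letter.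
   The length hypothesis gives x ∈ E_c, so x ≤ y for some y ∈ C_c, and
   y ≤ r r* with φ(r) = c; then r* x r ∈ E_t' and
   x δ_t = (y δ_c)((r* x r) δ_t').  Computing this product amounts to
   computing θ_{φ(r)} on V_w for w ≤ r* r, which is V_{r w r*}; the one
   non-formal point is that φ(q) φ(s) = 1 forces q v q* = s* v s for
   idempotents v below q* q and s s*. *)

From mathcomp Require Import all_boot all_algebra.
From Stdlib Require Import ClassicalEpsilon FunctionalExtensionality PropExtensionality.
Set Implicit Arguments. Unset Strict Implicit. Unset Printing Implicit Defensive.
Import GRing.Theory.

Section FreeGroup.
Variable A : eqType.
Local Notation word := (seq (A * bool)).

Definition letter_inv (l : A * bool) : A * bool := (l.1, ~~ l.2).

(* [red_cat u v] is the reduced form of [u ++ v] when [v] is reduced. *)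
Definition red_cat (u v : word) : word := foldr (@cons_red A) v u.

Lemma letter_invK : involutive letter_inv.
Proof. by case=> a b; rewrite /letter_inv /= negbK. Qed.

Lemma cancels_letter_inv (l m : A * bool) : cancels l m -> m = letter_inv l.
Proof.
case: l m => [a b] [c d]; rewrite /cancels /letter_inv /= => /andP[/eqP -> H].
by case: b d H => [] [].
Qed.

Lemma cancels_inv l : cancels l (letter_inv l).
Proof. by rewrite /cancels /letter_inv /= eqxx; case: l.2. Qed.

Lemma reduced_behead l (w : word) : reducedb (l :: w) -> reducedb w.
Proof. by case: w => // m w /andP[]. Qed.

Lemma cons_red_reduced_cons l (w : word) : reducedb (l :: w) -> cons_red l w = l :: w.
Proof. by case: w => //= m w /andP[/negbTE ->]. Qed.

Lemma cons_redK l (w : word) :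
  reducedb w -> cons_red l (cons_red (letter_inv l) w) = w.
Proof.
case: w => [|m w] /=; rewrite -/(letter_inv l); first by rewrite cancels_inv.
case: ifP => [/cancels_letter_inv|_ _]; last by rewrite /= cancels_inv.
rewrite letter_invK => -> /cons_red_reduced_cons.
by case: w => //= k w; case: ifP.
Qed.

Lemma red_cat_cons_red l v w : reducedb w ->
  red_cat (cons_red l v) w = cons_red l (red_cat v w).
Proof.
case: v => [|m v] //= Hw; case: ifP => //= /cancels_letter_inv ->.
by rewrite cons_redK //; apply: foldr_cons_red_reduced.
Qed.

Lemma red_catA u v w : reducedb w ->
  red_cat (red_cat u v) w = red_cat u (red_cat v w).
Proof. by elim: u => //= l u IH Hw; rewrite red_cat_cons_red ?IH. Qed.

Lemma red_catw0 u : reducedb u -> red_cat u [::] = u.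
Proof.
elim: u => //= l u IH Hu.
by rewrite IH ?cons_red_reduced_cons //; apply: reduced_behead Hu.
Qed.

Lemma red_cat_cat u1 u2 v : red_cat (u1 ++ u2) v = red_cat u1 (red_cat u2 v).
Proof. exact: foldr_cat. Qed.

Lemma red_cat_foldl_inv u acc v : reducedb v ->
  red_cat (foldl (fun acc l => cons_red (l.1, ~~ l.2) acc) acc u) v
  = red_cat (map letter_inv (rev u)) (red_cat acc v).
Proof.
elim: u acc => //= l u IH acc Hv.
by rewrite IH // red_cat_cons_red // rev_cons map_rcons -cats1 red_cat_cat.
Qed.

Lemma red_cat_invK u w : reducedb w ->
  red_cat (map letter_inv (rev u)) (red_cat u w) = w.
Proof.
elim: u => //= l u IH Hw.
rewrite rev_cons map_rcons -cats1 red_cat_cat /= -{2}(letter_invK l) cons_redK ?IH //.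
exact: foldr_cons_red_reduced.
Qed.

Lemma red_catK u w : reducedb w ->
  red_cat u (red_cat (map letter_inv (rev u)) w) = w.
Proof.
elim: u w => //= l u IH w Hw.
by rewrite rev_cons map_rcons -cats1 red_cat_cat /= IH ?cons_redK // cons_red_reduced.
Qed.

Lemma fg_mulA (g h k : FG A) : fg_mul g (fg_mul h k) = fg_mul (fg_mul g h) k.
Proof. by apply: val_inj; rewrite /= -!/(red_cat _ _) red_catA // (valP k). Qed.

Lemma fg_mul1l (g : FG A) : fg_mul (fg_one A) g = g.
Proof. exact: val_inj. Qed.

Lemma fg_mul1r (g : FG A) : fg_mul g (fg_one A) = g.
Proof. exact/val_inj/red_catw0/(valP g). Qed.

Lemma fg_mulVl (g : FG A) : fg_mul (fg_inv g) g = fg_one A.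
Proof.
apply: val_inj; rewrite /= -/(red_cat _ _) red_cat_foldl_inv ?(valP g) //.
by rewrite /= -[X in red_cat _ X]red_catw0 ?(valP g) // red_cat_invK.
Qed.

Lemma fg_mulVr (g : FG A) : fg_mul g (fg_inv g) = fg_one A.
Proof.
apply: val_inj; rewrite /= -/(red_cat _ _).
rewrite -[X in red_cat _ X]red_catw0 ?(valP (fg_inv g)) //.
by rewrite red_cat_foldl_inv //= red_catK.
Qed.

Lemma fg_mulKl (g h : FG A) : fg_mul (fg_inv g) (fg_mul g h) = h.
Proof. by rewrite fg_mulA fg_mulVl fg_mul1l. Qed.

Lemma fg_mulKr (g h : FG A) : fg_mul g (fg_mul (fg_inv g) h) = h.
Proof. by rewrite fg_mulA fg_mulVr fg_mul1l. Qed.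

Lemma fg_inv_uniq (g h : FG A) : fg_mul g h = fg_one A -> h = fg_inv g.
Proof. by move=> gh1; rewrite -(fg_mulKl g h) gh1 fg_mul1r. Qed.

Lemma fg_mul_eqr (s q t : FG A) : (fg_mul s q == t) = (q == fg_mul (fg_inv s) t).
Proof. by apply/eqP/eqP => [<-|->]; rewrite ?fg_mulKl ?fg_mulKr. Qed.

Lemma fg_cons (l : A * bool) (w : word) (Hlw : reducedb (l :: w)) (Hw : reducedb w) :
  exist _ (l :: w) Hlw = fg_mul (exist _ [:: l] isT) (exist _ w Hw).
Proof. by apply: val_inj; rewrite /= cons_red_reduced_cons. Qed.

End FreeGroup.

Section InverseSemigroup.
Variable S : invsg.
Local Notation "a · b" := (@smul S a b) (at level 40, left associativity).
Local Notation "a °" := (@sstar S a) (at level 2, format "a °").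
Local Notation z := (szero S).
Local Notation mA := (@smulA S).

Lemma idem_mulC e f : idem e -> idem f -> e · f = f · e.
Proof. exact: sidem_comm. Qed.

Lemma smul_idemCr x e f : idem e -> idem f -> x · e · f = x · f · e.
Proof. by move=> He Hf; rewrite -!mA (idem_mulC He Hf). Qed.

Lemma smul_idemr x e : idem e -> x · e · e = x · e.
Proof. by move=> He; rewrite -mA He. Qed.

Lemma idem_rsstar s : idem (s · s°).
Proof. by rewrite /idem mA sstar_inv1. Qed.

Lemma idem_lsstar s : idem (s° · s).
Proof. by rewrite /idem mA sstar_inv2. Qed.

Lemma smul_sstarK x s : x · s · s° · s = x · s.
Proof. by rewrite -!mA (mA s s° s) sstar_inv1. Qed.

Lemma smul_sstarK' x s : x · s° · s · s° = x · s°.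
Proof. by rewrite -!mA (mA s° s s°) sstar_inv2. Qed.

Lemma idem0 : idem z.
Proof. by rewrite /idem smul0l. Qed.

Lemma idemM e f : idem e -> idem f -> idem (e · f).
Proof.
move=> He Hf; rewrite /idem.
transitivity (e · (f · e) · f); first by rewrite !mA.
by rewrite (idem_mulC Hf He) !mA smul_idemr // He.
Qed.

Lemma sstar_uniq a b : a · b · a = a -> b · a · b = b -> b = a°.
Proof.
move=> aba bab.
have Iba : idem (b · a) by rewrite /idem mA bab.
have Iab : idem (a · b) by rewrite /idem mA aba.
have Eb : b = a° · a · b.
  transitivity (b · a · (a° · a) · b); first by rewrite !mA smul_sstarK bab.
  by rewrite (idem_mulC Iba (idem_lsstar a)) -(mA (a° · a) (b · a) b) bab.
have Ea : a° = a° · a · b.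
  transitivity (a° · (a · b · a) · a°); first by rewrite aba sstar_inv2.
  transitivity (a° · (a · b) · (a · a°)); first by rewrite !mA.
  by rewrite -!(mA a°) (idem_mulC Iab (idem_rsstar a)) !mA sstar_inv2.
by rewrite Eb -Ea.
Qed.

Lemma sstarK : involutive (@sstar S).
Proof. by move=> a; symmetry; apply: sstar_uniq; [exact: sstar_inv2|exact: sstar_inv1]. Qed.

Lemma sstar_idem e : idem e -> e° = e.
Proof. by move=> He; symmetry; apply: sstar_uniq; rewrite !He. Qed.

Lemma sstarM a b : (a · b)° = b° · a°.
Proof.
symmetry; apply: sstar_uniq.
- transitivity (a · ((b · b°) · (a° · a)) · b); first by rewrite !mA.
  by rewrite (idem_mulC (idem_rsstar b) (idem_lsstar a)) !mA smul_sstarK sstar_inv1.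
- transitivity (b° · ((a° · a) · (b · b°)) · a°); first by rewrite !mA.
  by rewrite -(idem_mulC (idem_rsstar b) (idem_lsstar a)) !mA smul_sstarK' sstar_inv2.
Qed.

Lemma sstar_neq0 s : s <> z -> s° <> z.
Proof. by move=> Hs H; apply: Hs; rewrite -(sstar_inv1 s) -mA H smul0l smul0r. Qed.

Lemma sle_refl (e : S) : idem e -> sle e e.
Proof. by move=> He; rewrite /sle He. Qed.

Lemma sle_trans (x y w : S) : sle x y -> sle y w -> sle x w.
Proof. by rewrite /sle => Hxy Hyw; rewrite Hxy {1}Hyw mA -Hxy. Qed.

Lemma sle_mull e f : idem e -> idem f -> sle (e · f) e.
Proof. by move=> He Hf; rewrite /sle -mA (idem_mulC Hf He) mA He. Qed.

Lemma sle_mulr (e f : S) : idem f -> sle (e · f) f.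
Proof. by move=> Hf; rewrite /sle -mA Hf. Qed.

Lemma sle_meet x e f : sle x e -> sle x f -> sle x (e · f).
Proof. by rewrite /sle => He Hf; rewrite mA -He -Hf. Qed.

Lemma sle0s (e : S) : sle z e.
Proof. by rewrite /sle smul0l. Qed.

Lemma sles0 e : sle e z -> e = z.
Proof. by rewrite /sle smul0r. Qed.

Lemma sle_mul2r e f x : idem x -> idem f -> sle e f -> sle (e · x) (f · x).
Proof.
move=> Hx Hf Hef; rewrite /sle.
transitivity (e · (f · x) · x); last by rewrite !mA -(mA e x f) (idem_mulC Hx Hf) !mA.
by rewrite !mA smul_idemr // -Hef.
Qed.

Lemma idem_conj r e : idem e -> idem (r · e · r°).
Proof.
move=> He; rewrite /idem.
transitivity (r · (e · (r° · r) · e) · r°); first by rewrite !mA.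
by rewrite (idem_mulC He (idem_lsstar r)) smul_idemr // !mA sstar_inv1.
Qed.

Lemma idem_conj_sstar r e : idem e -> idem (r° · e · r).
Proof. by move=> He; have := idem_conj r° He; rewrite sstarK. Qed.

Lemma conj_mul r e f : idem e -> idem f -> r · e · r° · (r · f · r°) = r · (e · f) · r°.
Proof.
move=> He Hf.
transitivity (r · (e · ((r° · r) · f)) · r°); first by rewrite !mA.
by rewrite (idem_mulC (idem_lsstar r) Hf) !mA smul_sstarK'.
Qed.

Lemma sle_conj r e f : idem e -> idem f -> sle e f -> sle (r · e · r°) (r · f · r°).
Proof. by move=> He Hf Hef; rewrite /sle conj_mul // -Hef. Qed.

Lemma conjK r e : idem e -> sle e (r° · r) -> r° · (r · e · r°) · r = e.
Proof.
move=> He Hle.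
transitivity ((r° · r) · e · (r° · r)); first by rewrite !mA.
by rewrite (idem_mulC (idem_lsstar r) He) (smul_idemr _ (idem_lsstar r)) -Hle.
Qed.

Lemma conjK' r e : idem e -> sle e (r · r°) -> r · (r° · e · r) · r° = e.
Proof. by move=> He; have := @conjK r° e He; rewrite sstarK. Qed.

Lemma sle_conj_range r w : idem w -> sle w (r° · r) -> sle (r · w · r°) (r · r°).
Proof. by move=> Hw /(sle_conj r Hw (idem_lsstar r)); rewrite !mA sstar_inv1. Qed.

Lemma smul_idem_meet a b x : idem x -> idem b -> a · x · (b · x) = a · b · x.
Proof.
move=> Hx Hb; rewrite !mA -(mA (a · x) b x) -(mA a x (b · x)) (mA x b x).
by rewrite -(mA x b) (idem_mulC Hb Hx) (mA x x b) Hx !mA smul_idemCr.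
Qed.

End InverseSemigroup.

Section Grading.
Variables (A : eqType) (S : invsg) (phi : S -> FG A).
Hypothesis phi_grading : pure_grading (@fg_mul A) (fg_one A) phi.
Local Notation "a · b" := (@smul S a b) (at level 40, left associativity).
Local Notation "a °" := (@sstar S a) (at level 2, format "a °").
Local Notation z := (szero S).
Local Notation mA := (@smulA S).

Lemma gradingM a b : a · b <> z -> phi (a · b) = fg_mul (phi a) (phi b).
Proof. by case: phi_grading => H _; apply: H. Qed.

Lemma grading_idem e : e <> z -> idem e -> phi e = fg_one A.
Proof. by case: phi_grading => _ H He Hi; apply/(H e He). Qed.

Lemma idem_grading1 e : e <> z -> phi e = fg_one A -> idem e.
Proof. by case: phi_grading => _ H He Hi; apply/(H e He). Qed.

Lemma grading_sstar s : s <> z -> phi s° = fg_inv (phi s).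
Proof.
move=> Hs; have Hss : s · s° <> z by move=> E; apply: Hs; rewrite -(sstar_inv1 s) E smul0l.
by apply: fg_inv_uniq; rewrite -gradingM // grading_idem //; apply: idem_rsstar.
Qed.

(* [a := q·v·s] is nonzero of degree 1, hence idempotent, so [a·a° = a°·a]. *)
Lemma conj_grading_inv q s v : idem v -> v <> z -> sle v (q° · q) -> sle v (s · s°) ->
  fg_mul (phi q) (phi s) = fg_one A -> q · v · q° = s° · v · s.
Proof.
move=> Hv Hvz Hvq Hvs Hphi.
set a := q · v · s.
have Ea : a° = s° · v · q° by rewrite /a !sstarM (sstar_idem Hv) mA.
have E1 : a · a° = q · v · q°.
  by rewrite Ea /a !mA -(mA (q · v) s s°) -(mA q v (s · s°)) -Hvs smul_idemr.
have E2 : a° · a = s° · v · s.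
  by rewrite Ea /a !mA -(mA (s° · v) q° q) -(mA s° v (q° · q)) -Hvq smul_idemr.
have Ha0 : a <> z.
  move=> Ha; apply: Hvz; rewrite -(conjK Hv Hvq) -E1 Ha.
  by rewrite smul0l smul0r smul0l.
have Hqv : q · v <> z by move=> H; apply: Ha0; rewrite /a H smul0l.
have Ia : idem a.
  by apply: idem_grading1; rewrite // /a !gradingM // (grading_idem Hvz Hv) fg_mul1r.
by rewrite -E1 -E2 sstar_idem.
Qed.

End Grading.

Lemma pdecT (P : Prop) : P -> pdec P = true.
Proof. by rewrite /pdec; case: excluded_middle_informative. Qed.

Lemma pdecF (P : Prop) : ~ P -> pdec P = false.
Proof. by rewrite /pdec; case: excluded_middle_informative. Qed.

Section Filters.
Variable S : invsg.
Local Notation "a · b" := (@smul S a b) (at level 40, left associativity).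
Local Notation "a °" := (@sstar S a) (at level 2, format "a °").
Local Notation z := (szero S).
Local Notation mA := (@smulA S).
Implicit Types F : S -> Prop.

Lemma filter_idem F y : is_filter F -> F y -> idem y.
Proof. by case=> H _ /H. Qed.

Lemma filter_up F y y' : is_filter F -> F y -> idem y' -> sle y y' -> F y'.
Proof. by case=> _ [_ [_ [H _]]]; apply: H. Qed.

Lemma filter_meet F y y' : is_filter F -> F y -> F y' -> F (y · y').
Proof. by case=> _ [_ [_ [_ H]]]; apply: H. Qed.

Lemma filter_neq0 F : is_filter F -> ~ F z.
Proof.
move=> HF Fz; case: (HF) => _ [_ [[y [Hy NFy]] _]]; apply: NFy.
exact: (filter_up HF Fz Hy (sle0s y)).
Qed.

Lemma tight_filter F : tight F -> is_filter F.
Proof. by case. Qed.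

(* For [x ∈ F] with [x ≤ s·s°], the filter generated by [s°·F·s]. *)
Definition conj_filter (s x : S) F : S -> Prop :=
  fun y => idem y /\ F (s · y · s° · x).

Lemma conj_filter_mem s x F : F x -> sle x (s · s°) -> is_filter F ->
  conj_filter s x F (s° · x · s).
Proof.
move=> Fx x_le HF; have Hx := filter_idem HF Fx.
by split; [exact: idem_conj_sstar | rewrite conjK' // Hx].
Qed.

Lemma conj_filter_is_filter s x F : F x -> sle x (s · s°) -> is_filter F ->
  is_filter (conj_filter s x F).
Proof.
move=> Fx x_le HF; have Hx := filter_idem HF Fx.
split; first by move=> y [].
split; first by exists (s° · x · s); apply: conj_filter_mem.
split.
  exists z; split; first exact: idem0.
  by case=> _; rewrite smul0r !smul0l; apply: filter_neq0.
split.
  move=> y y' [Hy Fy] Hy' Hyy'; split => //.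
  apply: (filter_up HF Fy); first by apply: idemM => //; apply: idem_conj.
  by apply: sle_mul2r => //; [apply: idem_conj | apply: sle_conj].
move=> y y' [Hy Fy] [Hy' Fy']; split; first exact: idemM.
by have := filter_meet HF Fy Fy'; rewrite smul_idem_meet ?conj_mul //; apply: idem_conj.
Qed.

Lemma conj_filter_ultra s x F : F x -> sle x (s · s°) -> ultrafilter F ->
  ultrafilter (conj_filter s x F).
Proof.
move=> Fx x_le [HF Fmax]; have Hx := filter_idem HF Fx.
split; first exact: conj_filter_is_filter.
move=> G HG FG g Gg; have Hg := filter_idem HG Gg.
set w := s° · x · s.
have Iw : idem w by exact: idem_conj_sstar.
have Gw : G w by apply: FG; apply: conj_filter_mem.
have w_le : sle w (s° · s) by rewrite /sle /w !mA smul_sstarK.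
have w_le' : sle w (s° · s°°) by rewrite sstarK.
have F_sub : forall u, F u -> conj_filter s° w G u.
  move=> u Fu; have Hu := filter_idem HF Fu; split => //.
  apply: FG; split; first by apply: idemM => //; apply: idem_conj.
  rewrite sstarK.
  have -> : s · (s° · u · s · w) · s° · x = u · x.
    transitivity ((s · s°) · u · (s · s°) · (x · (s · s°)) · x); first by rewrite /w !mA.
    rewrite -x_le smul_idemr // (idem_mulC (idem_rsstar s) Hu) (smul_idemr _ (idem_rsstar s)).
    by rewrite (smul_idemCr _ (idem_rsstar s) Hx) -mA -x_le.
  exact: filter_meet.
split => //.
apply: (Fmax _ (conj_filter_is_filter Gw w_le' HG) F_sub).
split; first by apply: idemM => //; apply: idem_conj.
rewrite sstarK.
have -> : s° · (s · g · s° · x) · s · w = g · w.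
  transitivity ((s° · s) · g · w · w); first by rewrite /w !mA.
  rewrite smul_idemr // (idem_mulC (idem_lsstar s) Hg) -mA.
  by rewrite (idem_mulC (idem_lsstar s) Iw) -w_le.
exact: filter_meet.
Qed.

Lemma conj_filter_tight s x F : F x -> sle x (s · s°) -> tight F ->
  tight (conj_filter s x F).
Proof.
move=> Fx x_le [HF Ftight]; have Hx := filter_idem HF Fx.
split; first exact: conj_filter_is_filter.
move=> xs ys [Hxs Hys].
pose push y := s · y · s° · x.
(* non-idempotents are sent to [0], which lies in no filter *)
pose push' y := if pdec (idem y) then push y else z.
have Hin : inB (x :: List.map push xs) (List.map push' ys) F.
  split.
    move=> y [<- //|/List.in_map_iff [y0 [<- Hy0]]].
    by case: (Hxs _ Hy0).
  move=> y /List.in_map_iff [y0 [<- Hy0]].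
  rewrite /push'; case: (classic (idem y0)) => Hi.
    by rewrite pdecT // => Fy; apply: (Hys _ Hy0).
  by rewrite pdecF //; apply: filter_neq0.
case: (Ftight _ _ Hin) => U [HU [HUx HUy]].
exists (conj_filter s x U); split.
  by apply: conj_filter_ultra => //; apply: HUx; left.
split.
  move=> y Hy; split; first by case: (Hxs _ Hy).
  by apply: HUx; right; apply: List.in_map.
move=> y Hy [Hi Uy]; apply: (HUy (push' y)); first exact: List.in_map.
by rewrite /push' pdecT.
Qed.

End Filters.

Local Open Scope ring_scope.

Section Indicators.
Variables (S : invsg) (R : comPzRingType).
Local Notation "a · b" := (@smul S a b) (at level 40, left associativity).
Local Notation z := (szero S).
Implicit Types (U V : (S -> Prop) -> Prop) (xi : S -> Prop).

Lemma indT U xi : U xi -> ind R U xi = 1.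
Proof. by move=> H; rewrite /ind pdecT. Qed.

Lemma indF U xi : ~ U xi -> ind R U xi = 0.
Proof. by move=> H; rewrite /ind pdecF. Qed.

Lemma eq_ind U V xi xi' : (U xi <-> V xi') -> ind R U xi = ind R V xi'.
Proof.
move=> H; case: (classic (U xi)) => Hx; first by rewrite !indT //; apply/H.
by rewrite !indF // => /H.
Qed.

Lemma indI U V xi : ind R U xi * ind R V xi = ind R (fun e => U e /\ V e) xi.
Proof.
case: (classic (U xi)) => HU; last by rewrite !(indF HU) mul0r indF //; case.
case: (classic (V xi)) => HV; last by rewrite (indF HV) mulr0 indF //; case.
by rewrite (indT HU) (indT HV) mulr1 indT.
Qed.

Lemma indD U V xi :
  ind R U xi - ind R U xi * ind R V xi = ind R (fun e => U e /\ ~ V e) xi.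
Proof.
case: (classic (U xi)) => HU; last by rewrite (indF HU) mul0r subr0 indF //; case.
case: (classic (V xi)) => HV.
  by rewrite (indT HU) (indT HV) mulr1 subrr indF //; case.
by rewrite (indT HU) (indF HV) mulr0 subr0 indT.
Qed.

Lemma indU U V xi :
  ind R U xi + ind R V xi - ind R U xi * ind R V xi = ind R (fun e => U e \/ V e) xi.
Proof.
case: (classic (U xi)) => HU; case: (classic (V xi)) => HV.
- by rewrite (indT HU) (indT HV) mulr1 addrK indT //; left.
- by rewrite (indT HU) (indF HV) mulr0 subr0 addr0 indT //; left.
- by rewrite (indF HU) (indT HV) mul0r subr0 add0r indT //; right.
- by rewrite (indF HU) (indF HV) mul0r subr0 addr0 indF //; case.
Qed.

Lemma ind_Vx0 xi : ind R (Vx z) xi = 0.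
Proof. by apply: indF => -[/tight_filter H]; apply: filter_neq0. Qed.

Lemma ind_Vx_nidem y xi : ~ idem y -> ind R (Vx y) xi = 0.
Proof. by move=> Hy; apply: indF => -[/tight_filter H Fy]; apply/Hy/(filter_idem H Fy). Qed.

Lemma ind_VxM x y xi : idem x -> idem y ->
  ind R (Vx x) xi * ind R (Vx y) xi = ind R (Vx (x · y)) xi.
Proof.
move=> Hx Hy; rewrite indI; apply: eq_ind; split.
  by case=> -[T Fx] [_ Fy]; split => //; apply: filter_meet => //; apply: tight_filter.
case=> T Fxy; have HF := tight_filter T.
by split; split => //; apply: (filter_up HF Fxy) => //; [apply: sle_mull | apply: sle_mulr].
Qed.

End Indicators.

Section Theta.
Variables (A : eqType) (S : invsg) (phi : S -> FG A).
Hypothesis phi_grading : pure_grading (@fg_mul A) (fg_one A) phi.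
Variable R : comPzRingType.
Local Notation "a · b" := (@smul S a b) (at level 40, left associativity).
Local Notation "a °" := (@sstar S a) (at level 2, format "a °").
Local Notation z := (szero S).
Local Notation mA := (@smulA S).

Lemma theta_conj_filter F s x y : is_filter F -> F x -> sle x (s · s°) -> s <> z ->
  theta phi (fg_inv (phi s)) F y <-> conj_filter s x F y.
Proof.
move=> HF Fx x_le Hs; have Hx := filter_idem HF Fx; split.
- case=> Hy [u [q [Fu [Hq [Hpq [u_le Hqy]]]]]]; split => //.
  have Hu := filter_idem HF Fu.
  have Fv : F (u · x) by exact: filter_meet.
  have Hv : idem (u · x) by exact: idemM.
  have Hv0 : u · x <> z by move=> E; apply: (filter_neq0 HF); rewrite -E.
  have Hvq : sle (u · x) (q° · q) := sle_trans (sle_mull Hu Hx) u_le.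
  have Hvs : sle (u · x) (s · s°) := sle_trans (sle_mulr _ Hx) x_le.
  have Hqs : fg_mul (phi q) (phi s) = fg_one A by rewrite Hpq fg_mulVl.
  have Ev : u · x = s · (q · (u · x) · q°) · s°.
    by rewrite (conj_grading_inv phi_grading Hv Hv0 Hvq Hvs Hqs) conjK'.
  apply: (filter_up HF Fv); first by apply: idemM => //; apply: idem_conj.
  apply: sle_meet; last exact: sle_mulr.
  rewrite {1}Ev; apply: sle_conj => //; first exact: idem_conj.
  by apply: sle_trans Hqy; apply: sle_conj => //; exact: sle_mull.
- case=> Hy Fsy; split => //.
  exists (s · y · s° · x), s°; split => //; split; first exact: sstar_neq0.
  split; first exact: grading_sstar.
  rewrite sstarK; split.
    by apply: sle_trans x_le; apply: sle_mulr.
  have -> : s° · (s · y · s° · x) · s = y · (s° · x · s).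
    transitivity ((s° · s) · y · (s° · x · s)); first by rewrite !mA.
    by rewrite (idem_mulC (idem_lsstar s) Hy) !mA smul_sstarK'.
  by apply: sle_mull => //; exact: idem_conj_sstar.
Qed.

Lemma tight_theta (g : FG A) xi : Dg phi g xi -> tight (theta phi (fg_inv g) xi).
Proof.
case=> Txi [x [[Hx [x0|[s [Hs [<- x_le]]]]] xix]].
  by case: (filter_neq0 (tight_filter Txi)); rewrite -x0.
have -> : theta phi (fg_inv (phi s)) xi = conj_filter s x xi.
  apply: functional_extensionality => y; apply: propositional_extensionality.
  exact: theta_conj_filter (tight_filter Txi) _ _ _.
exact: conj_filter_tight.
Qed.

Lemma theta_Vx r w xi : r <> z -> idem w -> sle w (r° · r) -> Dg phi (phi r) xi ->
  Vx w (theta phi (fg_inv (phi r)) xi) <-> Vx (r · w · r°) xi.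
Proof.
move=> Hr Hw w_le HD; have HF := tight_filter HD.1; split.
- case=> _ [_ [u [q [Fu [Hq [Hpq [u_le Hqw]]]]]]]; split; first exact: HD.1.
  have Hu := filter_idem HF Fu.
  have Eu : q° · (q · u · q°) · q = u by exact: conjK.
  have Hv0 : q · u · q° <> z.
    by move=> E; apply: (filter_neq0 HF); rewrite -Eu E smul0r smul0l in Fu.
  have Hvq : sle (q · u · q°) (q°° · q°).
    by rewrite sstarK; apply: sle_conj_range.
  have Hvr : sle (q · u · q°) (r° · r°°) by rewrite sstarK; exact: sle_trans Hqw w_le.
  have Hqr : fg_mul (phi q°) (phi r°) = fg_one A.
    by rewrite !grading_sstar // Hpq fg_mulVl.
  have := conj_grading_inv phi_grading (idem_conj q Hu) Hv0 Hvq Hvr Hqr.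
  rewrite !sstarK Eu => Eu'.
  apply: (filter_up HF Fu); first exact: idem_conj.
  by rewrite {1}Eu'; apply: sle_conj => //; apply: idem_conj.
- case=> _ Fx; split; first exact: tight_theta.
  split; first exact: Hw.
  exists (r · w · r°), r°; split => //; split; first exact: sstar_neq0.
  split; first exact: grading_sstar.
  by rewrite sstarK conjK //; split; [exact: sle_conj_range | exact: sle_refl].
Qed.

Lemma tphi_ind_Vx r w : r <> z -> idem w -> sle w (r° · r) ->
  forall xi, tphi phi (phi r) (ind R (Vx w)) xi = ind R (Vx (r · w · r°)) xi.
Proof.
move=> Hr Hw w_le xi; rewrite /tphi.
case: (classic (Dg phi (phi r) xi)) => HD.
  by rewrite pdecT //; apply: eq_ind; apply: theta_Vx.
rewrite pdecF // indF // => -[T Fx]; apply: HD; split => //.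
exists (r · w · r°); split => //; split; first exact: idem_conj.
by right; exists r; split => //; split => //; apply: sle_conj_range.
Qed.

End Theta.

Section CrossedProduct.
Variables (A : eqType) (S : invsg) (phi : S -> FG A) (R : comPzRingType).
Local Notation elt := (LRelt S A R).
Implicit Types (t : FG A) (f g : (S -> Prop) -> R) (xi : S -> Prop).

Lemma LR_eval_cat (u w : elt) t xi :
  LR_eval (u ++ w) t xi = LR_eval u t xi + LR_eval w t xi.
Proof. by rewrite /LR_eval big_cat. Qed.

Lemma LR_eval_nil t xi : @LR_eval S A R [::] t xi = 0.
Proof. by rewrite /LR_eval big_nil. Qed.

Lemma LR_eval_scale r (u : elt) t xi : LR_eval (LR_scale r u) t xi = r * LR_eval u t xi.
Proof. by rewrite /LR_eval /LR_scale big_map mulr_sumr. Qed.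

Lemma LR_eval1 s f t xi : LR_eval [:: (s, f)] t xi = if s == t then f xi else 0.
Proof. by rewrite /LR_eval big_cons big_nil /=; case: (s == t); rewrite ?addr0. Qed.

Lemma eq_tphi (s : FG A) f f' xi : (forall e, f e = f' e) -> tphi phi s f xi = tphi phi s f' xi.
Proof. by move=> H; rewrite /tphi H. Qed.

Lemma LR_eval_mul1 s f (w : elt) t xi :
  LR_eval (LR_mul phi [:: (s, f)] w) t xi =
  tphi phi s (fun e => tphi phi (fg_inv s) f e * LR_eval w (fg_mul (fg_inv s) t) e) xi.
Proof.
rewrite /LR_mul /= cats0 /LR_eval big_map /= /tphi; case: (pdec _).
  by rewrite mulr_sumr; apply: eq_bigl => q /=; apply: fg_mul_eqr.
by rewrite big1.
Qed.

Lemma LR_eval_mul1_single s g (w : elt) t f :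
  (forall t' xi, LR_eval w t' xi = LR_eval [:: (t, f)] t' xi) ->
  forall t' xi, LR_eval (LR_mul phi [:: (s, g)] w) t' xi =
    LR_eval [:: (fg_mul s t, tphi phi s (fun e => tphi phi (fg_inv s) g e * f e))] t' xi.
Proof.
move=> Ew t' xi; rewrite LR_eval_mul1 LR_eval1 fg_mul_eqr.
under eq_tphi => e do rewrite Ew LR_eval1.
case: eqP => // _; rewrite /tphi; case: (pdec _) => //.
by rewrite mulr0.
Qed.

Variables C Cinv : A -> S -> Prop.

Definition representable t f := exists w : elt,
  generated phi (@LR_gens S A R C Cinv) w /\
  forall t' xi, LR_eval w t' xi = LR_eval [:: (t, f)] t' xi.

Lemma eq_representable t f f' :
  (forall xi, f xi = f' xi) -> representable t f -> representable t f'.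
Proof.
by move=> H [w [Hw E]]; exists w; split => // t' xi; rewrite E !LR_eval1 H.
Qed.

Lemma representable0 t : representable t (fun _ => 0).
Proof.
exists [::]; split; first exact: gen_zero.
by move=> t' xi; rewrite LR_eval_nil LR_eval1; case: (_ == _).
Qed.

Lemma representableD t f f' : representable t f -> representable t f' ->
  representable t (fun xi => f xi + f' xi).
Proof.
move=> [w [Hw E]] [w' [Hw' E']]; exists (LR_add w w'); split; first exact: gen_add.
move=> t' xi; rewrite /LR_add LR_eval_cat E E' !LR_eval1.
by case: (_ == _); rewrite ?addr0.
Qed.

Lemma representableZ t r f : representable t f -> representable t (fun xi => r * f xi).
Proof.
move=> [w [Hw E]]; exists (LR_scale r w); split; first exact: gen_scale.
move=> t' xi; rewrite LR_eval_scale E !LR_eval1.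
by case: (_ == _); rewrite ?mulr0.
Qed.

End CrossedProduct.

Section VxSpan.
Variables (A : eqType) (S : invsg) (phi : S -> FG A) (R : comPzRingType).
Local Notation "a · b" := (@smul S a b) (at level 40, left associativity).
Implicit Types (t : FG A) (f g : (S -> Prop) -> R).

Definition Vspan t f := exists l : seq (R * S),
  (forall p, List.In p l -> Eg phi t p.2) /\
  forall xi, f xi = \sum_(p <- l) p.1 * ind R (Vx p.2) xi.

Lemma eq_Vspan t f f' : (forall xi, f xi = f' xi) -> Vspan t f -> Vspan t f'.
Proof. by move=> H [l [Hl E]]; exists l; split => // xi; rewrite -H. Qed.

Lemma Vspan0 t : Vspan t (fun _ => 0).
Proof. by exists [::]; split => // xi; rewrite big_nil. Qed.

Lemma Vspan_Vx t x : Eg phi t x -> Vspan t (ind R (Vx x)).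
Proof.
move=> Hx; exists [:: (1, x)]; split; first by move=> p [<-|].
by move=> xi; rewrite big_cons big_nil /= mul1r addr0.
Qed.

Lemma VspanD t f f' : Vspan t f -> Vspan t f' -> Vspan t (fun xi => f xi + f' xi).
Proof.
move=> [l [Hl E]] [l' [Hl' E']]; exists (l ++ l'); split.
  by move=> p /(List.in_app_or l l') [/Hl|/Hl'].
by move=> xi; rewrite big_cat (E xi) (E' xi).
Qed.

Lemma VspanZ t r f : Vspan t f -> Vspan t (fun xi => r * f xi).
Proof.
move=> [l [Hl E]]; exists [seq (r * p.1, p.2) | p <- l]; split.
  by move=> p /List.in_map_iff [q [<- /Hl]].
by move=> xi; rewrite big_map (E xi) mulr_sumr; apply: eq_bigr => p _; rewrite mulrA.
Qed.

Lemma VspanB t f g : Vspan t f -> Vspan t g -> Vspan t (fun xi => f xi - g xi).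
Proof.
move=> Hf Hg; apply: (eq_Vspan (f := fun xi => f xi + (-1) * g xi)).
  by move=> xi; rewrite mulN1r.
by apply: VspanD => //; apply: VspanZ.
Qed.

Lemma Vspan_sum t (l : seq (R * ((S -> Prop) -> R))) :
  (forall p, List.In p l -> Vspan t p.2) ->
  Vspan t (fun xi => \sum_(p <- l) p.1 * p.2 xi).
Proof.
elim: l => [|p l IH] Hl.
  by apply: eq_Vspan (Vspan0 t) => xi; rewrite big_nil.
apply: (eq_Vspan (f := fun xi => p.1 * p.2 xi + \sum_(q <- l) q.1 * q.2 xi)).
  by move=> xi; rewrite big_cons.
apply: VspanD; first by apply: VspanZ; apply: Hl; left.
by apply: IH => q Hq; apply: Hl; right.
Qed.

Lemma Eg_mulr t x y : Eg phi t x -> idem y -> Eg phi t (x · y).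
Proof.
move=> [Hx Hc] Hy; split; first exact: idemM.
case: Hc => [->|[s [Hs [Hps x_le]]]]; first by left; rewrite smul0l.
right; exists s; split => //; split => //; apply: sle_trans (sle_mull Hx Hy) x_le.
Qed.

Lemma Vspan_mulVx t f y : Vspan t f -> Vspan t (fun xi => f xi * ind R (Vx y) xi).
Proof.
move=> [l [Hl E]].
case: (classic (idem y)) => Hy; last first.
  by apply: eq_Vspan (Vspan0 t) => xi; rewrite ind_Vx_nidem ?mulr0.
exists [seq (p.1, p.2 · y) | p <- l]; split.
  by move=> p /List.in_map_iff [q [<- /Hl Hq]]; apply: Eg_mulr.
move=> xi; rewrite (E xi) big_map mulr_suml.
elim: l {E} Hl => [|p l IH] Hl; first by rewrite !big_nil.
rewrite !big_cons IH; last by move=> q Hq; apply: Hl; right.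
by case: (Hl p (or_introl erefl)) => Hp _; rewrite -mulrA ind_VxM.
Qed.

Lemma VspanM t f g : Vspan t f -> Vspan t g -> Vspan t (fun xi => f xi * g xi).
Proof.
move=> Hf [l [_ E]].
pose l' := [seq (p.1, fun xi => f xi * ind R (Vx p.2) xi) | p <- l].
apply: (eq_Vspan (f := fun xi => \sum_(p <- l') p.1 * p.2 xi)).
  by move=> xi; rewrite (E xi) big_map mulr_sumr; apply: eq_bigr => p _; rewrite mulrCA.
by apply: Vspan_sum => p /List.in_map_iff [q [<- _]]; apply: Vspan_mulVx.
Qed.

Lemma Vspan_Vx_meet t x0 (xs : seq S) : Eg phi t x0 ->
  Vspan t (ind R (fun eta => tight eta /\ eta x0 /\ forall x, List.In x xs -> eta x)).
Proof.
move=> Hx0; elim: xs => [|x xs IH].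
  by apply: eq_Vspan (Vspan_Vx Hx0) => xi; apply: eq_ind; split=> [[T F]|[T [F _]]].
apply: eq_Vspan (Vspan_mulVx x IH) => xi; rewrite indI; apply: eq_ind; split.
  by case=> [[T [F H]] [_ Fx]]; split => //; split => // y /= [<-|/H].
case=> T [F H]; split; first by split => //; split => // y Hy; apply: H; right.
by split => //; apply: H; left.
Qed.

Lemma Vspan_basic t x0 (xs ys : seq S) : Eg phi t x0 ->
  Vspan t (ind R (fun eta => tight eta /\ eta x0 /\ inB xs ys eta)).
Proof.
move=> Hx0; elim: ys => [|y ys IH].
  apply: eq_Vspan (Vspan_Vx_meet xs Hx0) => xi; apply: eq_ind; rewrite /inB.
  by split=> [[T [F H]]|[T [F [H _]]]].
apply: eq_Vspan (VspanB IH (Vspan_mulVx y IH)) => xi; rewrite indD; apply: eq_ind.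
split.
  case=> [[T [F [H1 H2]]] NV]; split => //; split => //; split => // y' /= [<-|/H2] //.
  by move=> Fy; apply: NV.
case=> T [F [H1 H2]]; split.
  by split => //; split => //; split => // y' Hy'; apply: H2; right.
by case=> _ Fy; apply: (H2 y) => //; left.
Qed.

End VxSpan.

Section CompactOpen.
Variables (A : eqType) (S : invsg) (phi : S -> FG A) (R : comPzRingType).
Implicit Types (t : FG A) (K : (S -> Prop) -> Prop).

Lemma Vspan_union t (I : Type) (O : I -> (S -> Prop) -> Prop) (s : list I) :
  (forall i, List.In i s -> Vspan phi t (ind R (O i))) ->
  Vspan phi t (ind R (fun eta => exists2 i, List.In i s & O i eta)).
Proof.
elim: s => [|i s IH] HO.
  by apply: eq_Vspan (Vspan0 phi R t) => xi; symmetry; apply: indF; case.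
have HOi := HO i (or_introl erefl).
have HOs := IH (fun j Hj => HO j (or_intror Hj)).
apply: eq_Vspan (VspanB (VspanD HOi HOs) (VspanM HOi HOs)) => xi.
rewrite indU; apply: eq_ind; split.
  case=> [Oi|[j Hj Oj]]; first by exists i => //; left.
  by exists j => //; right.
case=> j [<-|Hj] Oj; first by left.
by right; exists j.
Qed.

Lemma compact_open_basic_cover t K : compactT K -> openT K ->
  (forall xi, K xi -> Dg phi t xi) ->
  exists l : list (S * (seq S * seq S)), (forall p, List.In p l -> Eg phi t p.1) /\
    forall xi, K xi <-> exists2 p, List.In p l & tight xi /\ xi p.1 /\ inB p.2.1 p.2.2 xi.
Proof.
move=> HC [_ HKo] HKD.
pose I := {xi : S -> Prop | K xi}.
pose nbhd (i : I) (p : S * (seq S * seq S)) :=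
  [/\ Eg phi t p.1, proj1_sig i p.1, inB p.2.1 p.2.2 (proj1_sig i) &
      forall eta, tight eta -> inB p.2.1 p.2.2 eta -> K eta].
have Hnbhd : forall i, exists p, nbhd i p.
  move=> [xi Kxi]; case: (HKo _ Kxi) => xs [ys [Hin Hsub]].
  by case: (HKD _ Kxi) => _ [x0 [Hx0 Fx0]]; exists (x0, (xs, ys)).
pose pick i := proj1_sig (constructive_indefinite_description _ (Hnbhd i)).
have Hpick i : nbhd i (pick i) := proj2_sig (constructive_indefinite_description _ _).
pose O i eta := tight eta /\ eta (pick i).1 /\ inB (pick i).2.1 (pick i).2.2 eta.
have HOo : forall i, openT (O i).
  move=> i; split; first by move=> eta [].
  move=> eta [T [F [H1 H2]]]; exists ((pick i).1 :: (pick i).2.1), (pick i).2.2.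
  split; first by split => // y /= [<-|/H1].
  move=> eta' T' [H1' H2']; split => //; split; first by apply: H1'; left.
  by split => // y Hy; apply: H1'; right.
have HOc : forall xi, K xi -> exists i, O i xi.
  move=> xi Kxi; exists (exist _ xi Kxi).
  case: (Hpick (exist _ xi Kxi)) => _ /= F Hin _.
  by split; [case: (HKD _ Kxi) | split].
case: (HC I O HOo HOc) => s Hs.
exists (map pick s); split.
  by move=> p /List.in_map_iff [i [<- _]]; case: (Hpick i).
move=> xi; split.
  by case/Hs => i Hi Oi; exists (pick i); first exact: List.in_map.
case=> p /List.in_map_iff [i [<- _]] [T [_ Hin]].
by case: (Hpick i) => _ _ _; apply.
Qed.

Lemma Vspan_compact_open t K : compactT K -> openT K ->
  (forall xi, K xi -> Dg phi t xi) -> Vspan phi t (ind R K).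
Proof.
move=> HC HO HKD; have [l [Hl EK]] := compact_open_basic_cover HC HO HKD.
have Hcov : Vspan phi t (ind R (fun eta =>
    exists2 p, List.In p l & tight eta /\ eta p.1 /\ inB p.2.1 p.2.2 eta)).
  by apply: Vspan_union => p /Hl; apply: Vspan_basic.
by apply: eq_Vspan Hcov => xi; apply: eq_ind; apply: iff_sym.
Qed.

Lemma Lc_Vspan t (f : (S -> Prop) -> R) : Lc_in phi t f -> Vspan phi t f.
Proof.
case=> l [Hl E]; apply: eq_Vspan (Vspan_sum (l := [seq (p.1, ind R p.2) | p <- l]) _).
  by move=> xi; rewrite E big_map.
move=> _ /List.in_map_iff [p [<- /Hl [HC [HO HD]]]].
exact: Vspan_compact_open.
Qed.

End CompactOpen.

Section Generation.
Variables (A : eqType) (S : invsg) (phi : S -> FG A) (R : comPzRingType).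
Variables C Cinv : A -> S -> Prop.
Hypothesis phi_grading : pure_grading (@fg_mul A) (fg_one A) phi.
Local Notation "a · b" := (@smul S a b) (at level 40, left associativity).
Local Notation "a °" := (@sstar S a) (at level 2, format "a °").
Local Notation z := (szero S).
Local Notation mA := (@smulA S).

Lemma Eg_conj_sstar c t' (r x : S) : Eg phi (fg_mul c t') x -> phi r = c -> r <> z ->
  x <> z -> sle x (r · r°) -> Eg phi t' (r° · x · r).
Proof.
move=> [Hx [x0|[s [Hs [Hps x_le]]]]] Hpr Hr Hx0 x_ler; first by case: Hx0.
have Ex : r · (r° · x · r) · r° = x by rewrite conjK'.
split; first exact: idem_conj_sstar.
have Hrs : r° · s <> z.
  move=> E; apply: Hx0; rewrite -Ex.
  suff -> : r° · x · r = z by rewrite smul0r smul0l.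
  by rewrite x_le (idem_mulC Hx (idem_rsstar s)) !mA E !smul0l.
right; exists (r° · s); split => //; split.
  by rewrite gradingM // grading_sstar // Hpr Hps fg_mulKl.
rewrite sstarM sstarK !mA.
by have := sle_conj r° Hx (idem_rsstar s) x_le; rewrite sstarK !mA.
Qed.

Lemma tphi_Vx_factor (r x y : S) xi : r <> z -> idem x -> idem y -> sle x y ->
  sle y (r · r°) ->
  tphi phi (phi r) (fun e => tphi phi (fg_inv (phi r)) (ind R (Vx y)) e *
                             ind R (Vx (r° · x · r)) e) xi = ind R (Vx x) xi.
Proof.
move=> Hr Hx Hy x_le y_le.
have y_le' : sle y (r°° · r°) by rewrite sstarK.
have x_le' : sle (r° · x · r) (r° · r).
  have := sle_conj r° Hx (idem_rsstar r) (sle_trans x_le y_le).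
  by rewrite sstarK !mA smul_sstarK.
rewrite -(grading_sstar phi_grading Hr).
under eq_tphi => e do rewrite (tphi_ind_Vx phi_grading R (sstar_neq0 Hr) Hy y_le') sstarK.
have Iy := idem_conj_sstar r Hy; have Ix := idem_conj_sstar r Hx.
under eq_tphi => e do rewrite ind_VxM //.
rewrite (tphi_ind_Vx phi_grading R Hr); last first.
- by apply: sle_trans x_le'; apply: sle_mulr.
- exact: idemM.
have := conj_mul r° Hy Hx; rewrite sstarK => ->.
by rewrite conjK' ?(idem_mulC Hy Hx) -?x_le //; apply: sle_trans y_le.
Qed.

Lemma representable_step c (Cc : S -> Prop) t' :
  (forall y, Cc y -> @LR_gens S A R C Cinv (xdelta R y c)) ->
  (forall y, Cc y -> Eg phi c y) ->
  (forall x, Eg phi c x -> exists2 y, Cc y & sle x y) ->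
  (forall x, Eg phi (fg_mul c t') x -> Eg phi c x) ->
  (forall x, Eg phi t' x -> representable phi C Cinv t' (ind R (Vx x))) ->
  forall x, Eg phi (fg_mul c t') x -> representable phi C Cinv (fg_mul c t') (ind R (Vx x)).
Proof.
move=> Hgen HCE HEC Ec IH x Hx.
case: (classic (x = z)) => [->|Hx0].
  by apply: eq_representable (representable0 _ _ _ _ _) => xi; rewrite ind_Vx0.
case: (HEC _ (Ec _ Hx)) => y Cy x_le.
case: (HCE _ Cy) => Hy [y0|[r [Hr [Hpr y_le]]]].
  by case: Hx0; apply: sles0; rewrite -y0.
have [w [Hw Ew]] := IH _ (Eg_conj_sstar Hx Hpr Hr Hx0 (sle_trans x_le y_le)).
exists (LR_mul phi (xdelta R y c) w); split.
  by apply: gen_mul => //; apply/gen_base/Hgen.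
move=> t'' xi; rewrite (LR_eval_mul1_single _ _ _ Ew) !LR_eval1 -Hpr.
by case: (_ == _) => //; apply: tphi_Vx_factor => //; case: Hx.
Qed.

Hypothesis Eg_prefix : forall s t : FG A, fg_len (fg_mul s t) = (fg_len s + fg_len t)%N ->
  forall x, Eg phi (fg_mul s t) x -> Eg phi s x.
Hypotheses (C_Eg : forall a x, C a x -> Eg phi (fg_gen a) x)
  (Eg_C : forall a x, Eg phi (fg_gen a) x -> exists2 y, C a y & sle x y)
  (Cinv_Eg : forall a x, Cinv a x -> Eg phi (fg_geninv a) x)
  (Eg_Cinv : forall a x, Eg phi (fg_geninv a) x -> exists2 y, Cinv a y & sle x y).

Lemma representable_Vx t x : Eg phi t x -> representable phi C Cinv t (ind R (Vx x)).
Proof.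
move: {2}(fg_len t) (erefl (fg_len t)) => n.
elim: n t x => [|n IH] [[|l w] Hlw] x // Hn Hx.
  have -> : exist _ [::] Hlw = fg_one A by apply: val_inj.
  exists (xdelta R x (fg_one A)); split => //.
  by apply: gen_base; left; exists x; case: Hx.
have Hw := reduced_behead Hlw; pose t' : FG A := exist _ w Hw.
have IH' : forall x, Eg phi t' x -> representable phi C Cinv t' (ind R (Vx x)).
  by move=> x'; apply: IH; case: Hn.
have Hlen : fg_len (fg_mul (exist _ [:: l] isT) t') = (1 + fg_len t')%N.
  by rewrite -fg_cons.
move/Eg_prefix: Hlen => Hlen; rewrite (fg_cons Hlw Hw) -/t' {Hn Hlw} in Hx *.
case: l Hx Hlen => a [] Hx Hlen.
- apply: (representable_step (Cc := C a)) => //; last exact: Eg_C.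
  + by move=> y Cy; right; left; exists a, y.
  + exact: C_Eg.
- apply: (representable_step (Cc := Cinv a)) => //; last exact: Eg_Cinv.
  + by move=> y Cy; right; right; exists a, y.
  + exact: Cinv_Eg.
Qed.

Lemma representable_Vspan t (f : (S -> Prop) -> R) :
  Vspan phi t f -> representable phi C Cinv t f.
Proof.
case=> l [Hl E].
apply: (eq_representable (f := fun xi => \sum_(p <- l) p.1 * ind R (Vx p.2) xi)).
  by move=> xi; rewrite E.
elim: l {E} Hl => [|p l IH] Hl.
  by apply: eq_representable (representable0 _ _ _ _ _) => xi; rewrite big_nil.
apply: (eq_representable (f := fun xi =>
  p.1 * ind R (Vx p.2) xi + \sum_(q <- l) q.1 * ind R (Vx q.2) xi)).
  by move=> xi; rewrite big_cons.
apply: representableD; last by apply: IH => q Hq; apply: Hl; right.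
by apply/representableZ/representable_Vx/Hl; left.
Qed.

End Generation.

Theorem mainTheorem17 (A : eqType) (S : invsg) (phi : S -> FG A)
  (R : comPzRingType) (C Cinv : A -> S -> Prop) :
  strongly_Estar_unitary S ->
  pure_grading (@fg_mul A) (fg_one A) phi ->
  (forall s t : FG A, fg_len (fg_mul s t) = (fg_len s + fg_len t)%N ->
     forall x, Eg phi (fg_mul s t) x -> Eg phi s x) ->
  (forall a x, C a x -> Eg phi (fg_gen a) x) ->
  (forall a x, Eg phi (fg_gen a) x -> exists2 y, C a y & sle x y) ->
  (forall a x, Cinv a x -> Eg phi (fg_geninv a) x) ->
  (forall a x, Eg phi (fg_geninv a) x -> exists2 y, Cinv a y & sle x y) ->
  forall z : LRelt S A R, LR_valid phi z ->
    exists w : LRelt S A R,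
      generated phi (@LR_gens S A R C Cinv) w /\ LR_eval w = LR_eval z.
Proof.
(* strong E*-unitarity is implied by the existence of the pure grading [phi] *)
move=> _ phi_grading Eg_prefix C_Eg Eg_C Cinv_Eg Eg_Cinv.
elim=> [|[t f] z IH] Hz; first by exists [::]; split; first exact: gen_zero.
have [w1 [Hw1 E1]] : representable phi C Cinv t f.
  apply: (representable_Vspan phi_grading Eg_prefix C_Eg Eg_C Cinv_Eg Eg_Cinv).
  exact/Lc_Vspan/(Hz (t, f))/or_introl.
have [w2 [Hw2 E2]] := IH (fun p Hp => Hz p (or_intror Hp)).
exists (LR_add w1 w2); split; first exact: gen_add.
apply: functional_extensionality => t'; apply: functional_extensionality => xi.
by rewrite /LR_add LR_eval_cat E1 E2 -LR_eval_cat.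
Qed.
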